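(* For all blueprints $\alpha,\beta$: if $\alpha\sqsubseteq_1\beta$, then $\mathbb F(\alpha)\subseteq\mathbb F(\beta)$.
   Context: Addresses are finite sequences of positive integers with prefix order $\le$, concatenation $\cdot$, empty address $\varepsilon$. A partial tree is a function on a set of addresses; $\pi|_a$ is $c\mapsto\pi(a\cdot c)$. $\mathfrak S$ consists of all formulas (arity 0) and symbols $@_\phi$ (arity 2). A blueprint is a finite partial tree with values in $\mathfrak S$ such that if $\alpha(a)=@_\phi$ then $\alpha|_{a\cdot(1)},\alpha|_{a\cdot(2)}$ are non-empty. Notation: $\emptyset_{\mathbb B}$ empty blueprint; $\phi$ denotes $\varepsilon\mapsto\phi$; $@_\phi(\alpha_1,\alpha_2)$ ($\alpha_i$ non-empty) has root $@_\phi$ and $\alpha_i$ at $(i)$; for pairwise incomparable $\bar a=(a_1,\dots,a_k)$, $*_{\bar a}(\alpha_1,\dots,\alpha_k)$ is the blueprint of minimal domain whose restriction at $a_i$ is $\alpha_i$; $*(\alpha_1,\dots,\alpha_k)=*_{((1),\dots,(k))}(\dots)$. Extraction $\alpha\rhd^a_\phi\beta$: (1) $\phi\rhd^\varepsilon_\phi\emptyset_{\mathbb B}$; (2) if $\alpha\rhd^a_\phi\beta$ ($\gamma,\alpha$ non-empty) then $@_\psi(\gamma,\alpha)\rhd^{(2)\cdot a}_\phi*(\gamma,\beta)$; (3) if $\alpha\rhd^a_\phi\beta$, $b\ne\varepsilon$, $(b,c_1,\dots,c_k)$ pairwise incomparable, then $*_{(b,c_1,\dots,c_k)}(\alpha,\gamma_1,\dots,\gamma_k)\rhd^{b\cdot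 a}_\phi*_{(b,c_1,\dots,c_k)}(\beta,\gamma_1,\dots,\gamma_k)$. $\rhd^+_\phi$ is the transitive closure of $\bigcup_a\rhd^a_\phi$; $\mathbb F(\alpha)$ is the set of sequences $(\phi_1,\dots,\phi_n)$, $n\ge0$, with $\alpha\rhd^+_{\phi_n}\cdots\rhd^+_{\phi_1}\emptyset_{\mathbb B}$. $\equiv$ is the least relation with: $\emptyset_{\mathbb B}\equiv\emptyset_{\mathbb B}$; $\phi\equiv\phi$; $@_\phi(\alpha_1,\alpha_2)\equiv@_\phi(\beta_1,\beta_2)$ if $\alpha_i\equiv\beta_i$; $*_{\bar a}(\alpha_1,\dots,\alpha_n)\equiv*_{\bar b}(\beta_1,\dots,\beta_n)$ if $\alpha_i\equiv\beta_i$ for all $i$ (with $\bar a,\bar b$ pairwise-incomparable sequences of length $n$, not both $(\varepsilon)$, and some $\alpha_i,\beta_i$ non-empty). $\curvearrowleft_m$ is the least relation with: (1) if $\gamma_1\equiv\dots\equiv\gamma_{m+1}\not\equiv\emptyset_{\mathbb B}$ then $*_{\bar a}(\gamma_1,\dots,\gamma_m)\curvearrowleft_m*_{\bar a\cdot(b)}(\gamma_1,\dots,\gamma_{m+1})$; (2) if $\alpha=*_{\bar a}(\alpha_1,\dots,\alpha_n)$, $\beta=*_{\bar b}(\beta_1,\dots,\beta_p)$, $\alpha\curvearrowleft_m\beta$, $\gamma$ non-empty, then $@_\phi(\alpha,\gamma)\curvearrowleft_m@_\phi(\beta,\gamma)$, $@_\phi(\gamma,\alpha)\curvearrowleft_m@_\phi(\gamma,\beta)$,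 $*_{\bar a\cdot(c)}(\alpha_1,\dots,\alpha_n,\gamma)\curvearrowleft_m*_{\bar b\cdot(c)}(\beta_1,\dots,\beta_p,\gamma)$. $\sqsubseteq_m$ is the reflexive transitive closure of $\equiv\cup\curvearrowleft_m$. *)

From Stdlib Require Import Relations.Relation_Operators.
From mathcomp Require Import all_boot.
Set Implicit Arguments. Unset Strict Implicit. Unset Printing Implicit Defensive.

Section Blueprints.
Variable F : Type. (* the set of formulas *)

Definition addr := seq nat.
Definition is_addr (a : addr) : bool := all (fun i => 0 < i) a.

Definition incomparable (a b : addr) : bool := ~~ prefix a b && ~~ prefix b a.
Definition pw_incomp (l : seq addr) : bool := all is_addr l && pairwise incomparable l.

(* The symbols of S: formulas (arity 0) and @_phi (arity 2). *)
Inductive sym := Form of F | At of F.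

Definition ptree := addr -> option sym.
Definition pempty : ptree := fun _ => None.
Definition nonempty (t : ptree) : Prop := exists a, t a <> None.
Definition restr (t : ptree) (a : addr) : ptree := fun c => t (a ++ c).

Definition blueprint (t : ptree) : Prop :=
  [/\ exists l : seq addr, forall a, t a <> None -> a \in l,
      forall a, t a <> None -> is_addr a
    & forall a phi, t a = Some (At phi) ->
        nonempty (restr t (a ++ [:: 1])) /\ nonempty (restr t (a ++ [:: 2]))].

Definition leaf (phi : F) : ptree := fun a => if a is [::] then Some (Form phi) else None.

Definition at2 (phi : F) (t1 t2 : ptree) : ptree := fun a =>
  match a with
  | [::] => Some (At phi)
  | i :: c => if i == 1 then t1 c else if i == 2 then t2 c else None
  end.

(* *_{(a_1,..,a_k)}(t_1,..,t_k), given as the list of pairs (a_i, t_i);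
   meaningful when the a_i are pairwise incomparable: the tree with minimal
   domain whose restriction at a_i is t_i. *)
Definition star (s : seq (addr * ptree)) : ptree := fun d =>
  match [seq p <- s | prefix p.1 d] with
  | p :: _ => p.2 (drop (size p.1) d)
  | [::] => None
  end.

Definition star0 (ts : seq ptree) : ptree :=
  star (zip [seq [:: i.+1] | i <- iota 0 (size ts)] ts).

Definition all_bp (s : seq (addr * ptree)) : Prop :=
  forall i, i < size s -> blueprint (nth ([::], pempty) s i).2.

Inductive ext : addr -> F -> ptree -> ptree -> Prop :=
| ext_leaf phi : ext [::] phi (leaf phi) pempty
| ext_at a phi psi g t u :
    blueprint g -> nonempty g -> nonempty t ->
    ext a phi t u ->
    ext (2 :: a) phi (at2 psi g t) (star0 [:: g; u])
| ext_star a phi b t u (gs : seq (addr * ptree)) :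
    b <> [::] -> pw_incomp (b :: unzip1 gs) ->
    all_bp gs ->
    ext a phi t u ->
    ext (b ++ a) phi (star ((b, t) :: gs)) (star ((b, u) :: gs)).

Definition ext_plus (phi : F) : ptree -> ptree -> Prop :=
  clos_trans ptree (fun t u => exists a, ext a phi t u).

(* inF t l  <->  l = (phi_1,..,phi_n) is in F(t), i.e.
   t |>^+_{phi_n} ... |>^+_{phi_1} empty. *)
Inductive inF : ptree -> seq F -> Prop :=
| inF_nil : inF pempty [::]
| inF_rcons t u phi l : ext_plus phi t u -> inF u l -> inF t (rcons l phi).

Inductive equiv : ptree -> ptree -> Prop :=
| equiv_empty : equiv pempty pempty
| equiv_leaf phi : equiv (leaf phi) (leaf phi)
| equiv_at phi t1 t2 u1 u2 :
    nonempty t1 -> nonempty t2 -> nonempty u1 -> nonempty u2 ->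
    equiv t1 u1 -> equiv t2 u2 -> equiv (at2 phi t1 t2) (at2 phi u1 u2)
| equiv_star (s r : seq (addr * ptree)) :
    size s = size r ->
    pw_incomp (unzip1 s) -> pw_incomp (unzip1 r) ->
    ~ (unzip1 s = [:: [::]] /\ unzip1 r = [:: [::]]) ->
    (forall i, i < size s -> equiv (nth ([::], pempty) s i).2 (nth ([::], pempty) r i).2) ->
    (exists i, i < size s /\ nonempty (nth ([::], pempty) s i).2
                          /\ nonempty (nth ([::], pempty) r i).2) ->
    equiv (star s) (star r).

Inductive arr (m : nat) : ptree -> ptree -> Prop :=
| arr_base (as_ : seq addr) (b : addr) (gs : seq ptree) :
    size as_ = m -> size gs = m.+1 ->
    pw_incomp (rcons as_ b) ->
    (forall i, i < m -> equiv (nth pempty gs i) (nth pempty gs i.+1)) ->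
    ~ equiv (nth pempty gs m) pempty ->
    arr m (star (zip as_ (take m gs))) (star (zip (rcons as_ b) gs))
| arr_atl phi t u g :
    arr m t u -> nonempty t -> nonempty u -> blueprint g -> nonempty g ->
    arr m (at2 phi t g) (at2 phi u g)
| arr_atr phi t u g :
    arr m t u -> nonempty t -> nonempty u -> blueprint g -> nonempty g ->
    arr m (at2 phi g t) (at2 phi g u)
| arr_star (s r : seq (addr * ptree)) (c : addr) g :
    pw_incomp (unzip1 s) -> pw_incomp (unzip1 r) ->
    all_bp s -> all_bp r ->
    pw_incomp (rcons (unzip1 s) c) -> pw_incomp (rcons (unzip1 r) c) ->
    arr m (star s) (star r) -> blueprint g -> nonempty g ->
    arr m (star (rcons s (c, g))) (star (rcons r (c, g))).

Definition sqsub (m : nat) : ptree -> ptree -> Prop :=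
  clos_refl_trans ptree (fun t u => equiv t u \/ arr m t u).

End Blueprints.

(* Extraction is pruning: [t |>^a_phi u] holds exactly when [a] is a leaf [phi] of [t]
   whose strict ancestors are @-nodes entered through their right argument, and [u] is
   [t] with the path to [a] deleted.  So it suffices to show that [equiv] and the
   relation [arr 1] are simulations for such prunings.  Equivalent blueprints have
   corresponding extractable leaves, with equivalent remainders.  If [t] arrows [u],
   then [u] is [t] with an extra copy [g1] of one of its subtrees [g0], grafted so
   that every node of [t] above the copy is also above [g0], on the same side: a leaf
   of the context is extracted from [u] in the same way, and a leaf of [g0] is matched
   by extracting it and then its counterpart in [g1], after which the remainders are
   again related by a graft. *)

From Pilot Require Import Defs.
From Stdlib Require Import Relations.Relation_Operators.
From mathcomp Require Import all_boot.
From Stdlib Require Import FunctionalExtensionality Classical.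
Set Implicit Arguments. Unset Strict Implicit. Unset Printing Implicit Defensive.

Section Blueprints.
Variable F : Type.
Local Notation ptree := (ptree F).
Local Notation pempty := (pempty F).
Local Notation equiv := (@Defs.equiv F).
Local Notation nth0 s i := (nth ([::], pempty) s i).
Implicit Types (t u g h : ptree) (a b c d p : addr) (phi psi : F)
  (s r : seq (addr * ptree)).

Lemma ptree_ext t u : (forall d, t d = u d) -> t = u.
Proof. exact: functional_extensionality. Qed.

Lemma not_nonempty t : ~ nonempty t -> t = pempty.
Proof. by move=> ht; apply: ptree_ext => d; apply: NNPP => hd; apply: ht; exists d. Qed.

Lemma prefix_cat_total a b x y : a ++ x = b ++ y -> prefix a b || prefix b a.
Proof.
elim: a b => [|h a IH] [|k b] //=.
by case=> -> /IH; rewrite eqxx.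
Qed.

Lemma prefix_total a b d : prefix a d -> prefix b d -> prefix a b || prefix b a.
Proof. by move=> /prefixP[x ->] /prefixP[y] /esym /prefix_cat_total; rewrite orbC. Qed.

Lemma incomparable_prefix a b d : incomparable a b -> prefix a d -> prefix b d -> False.
Proof.
by case/andP=> /negbTE na /negbTE nb ha hb; move: (prefix_total ha hb); rewrite na nb.
Qed.

Lemma incomparableC a b : incomparable a b = incomparable b a.
Proof. by rewrite /incomparable andbC. Qed.

Lemma incomparable_cat a b y : incomparable a b -> ~~ prefix a (b ++ y).
Proof. by move=> h; apply/negP => hp; apply: (incomparable_prefix h hp (prefix_prefix b y)). Qed.

Lemma prefix_cat_drop b a d : prefix b d -> prefix d (b ++ a) = prefix (drop (size b) d) a.
Proof. by move=> /prefixP[z ->]; rewrite drop_size_cat // prefix_catr // eqxx. Qed.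

Lemma prefix_cat_prefix b a d : prefix d (b ++ a) -> ~~ prefix b d -> prefix d b.
Proof. by move=> /prefixP[w] /esym /prefix_cat_total; case/orP=> [->|->]. Qed.

Lemma prefix_nth_cons p a : prefix p a -> p != a -> exists w, a = p ++ nth 0 a (size p) :: w.
Proof.
case/prefixP => -[|k w] ->; first by rewrite cats0 eqxx.
by move=> _; exists w; rewrite nth_cat ltnn subnn.
Qed.

Lemma nth_cat_size (b a : addr) k : nth 0 (b ++ a) (size (b ++ k)) = nth 0 a (size k).
Proof. by rewrite nth_cat !size_cat ltnNge leq_addr /= addKn. Qed.

Lemma pw_incomp_nth r i k : pw_incomp (unzip1 r) -> i < size r -> k < size r ->
  i != k -> incomparable (nth0 r i).1 (nth0 r k).1.
Proof.
case/andP=> _ /(pairwiseP [::]) H hi hk hik.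
rewrite -!(nth_map ([::], pempty) [::] fst) //.
have hi' : i < size (unzip1 r) by rewrite size_map.
have hk' : k < size (unzip1 r) by rewrite size_map.
by case: (ltngtP i k) hik => // hlt _; [exact: H | rewrite incomparableC; exact: H].
Qed.

Lemma pw_incomp_cons b s : pw_incomp (b :: unzip1 s) ->
  (forall i, i < size s -> incomparable b (nth0 s i).1) /\ pw_incomp (unzip1 s).
Proof.
rewrite /pw_incomp /= => /andP[/andP[_ ha] /andP[hall hpw]]; split; last by rewrite ha hpw.
move=> i hi; move/allP: hall; apply.
by rewrite -(nth_map _ [::]) // mem_nth // size_map.
Qed.

Lemma pw_incomp_singles j (L : seq nat) : 0 < j -> all (fun i => 0 < i) L ->
  uniq (j :: L) -> pw_incomp [seq [:: i] | i <- j :: L].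
Proof.
move=> hj hL hu; apply/andP; split.
  apply/allP => x /mapP [i hi ->]; rewrite /is_addr /= andbT.
  by move: hi; rewrite inE => /orP[/eqP ->|/(allP hL)].
rewrite pairwise_map; move: hu; rewrite uniq_pairwise; apply: sub_pairwise.
by move=> x y /= hxy; rewrite /incomparable /= !andbT (negbTE hxy) eq_sym (negbTE hxy).
Qed.

(** * Juxtaposition *)

Lemma star_cons c h s d :
  star ((c, h) :: s) d = if prefix c d then h (drop (size c) d) else star s d.
Proof. by rewrite /star /=; case: ifP. Qed.

Lemma star_none s d : (forall i, i < size s -> ~~ prefix (nth0 s i).1 d) -> star s d = None.
Proof.
elim: s => [|[c h] s IH] H //=.
rewrite star_cons (negbTE (H 0 isT)) IH // => i hi; exact: (H i.+1).
Qed.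

Lemma star_some s d : star s d <> None -> exists2 i, i < size s & prefix (nth0 s i).1 d.
Proof.
elim: s => [|[c h] s IH] //; rewrite star_cons; case: ifP => [hc _|_ /IH [i hi hp]].
  by exists 0.
by exists i.+1.
Qed.

Lemma star_empty s : (forall k, k < size s -> (nth0 s k).2 = pempty) -> star s = pempty.
Proof.
move=> H; apply: ptree_ext => d; elim: s H => [|[c h] s IH] H //.
have /= -> := H 0 isT; rewrite star_cons IH; first by case: ifP.
by move=> k hk; exact: (H k.+1 hk).
Qed.

Lemma star_nth s i d : pairwise incomparable (unzip1 s) -> i < size s ->
  prefix (nth0 s i).1 d -> star s d = (nth0 s i).2 (drop (size (nth0 s i).1) d).
Proof.
elim: s i => [|[c h] s IH] [|i] //= /andP[hall hpw] hi hp; rewrite star_cons.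
  by rewrite hp.
case: ifP => hc; last exact: IH.
exfalso; apply: (@incomparable_prefix c (nth0 s i).1 d) => //.
move/allP: hall; apply.
by rewrite -(nth_map _ [::]) // mem_nth // size_map.
Qed.

Lemma star_nth_cat s i x : pw_incomp (unzip1 s) -> i < size s ->
  star s ((nth0 s i).1 ++ x) = (nth0 s i).2 x.
Proof.
by case/andP=> _ hpw hi; rewrite (star_nth hpw hi (prefix_prefix _ _)) drop_size_cat.
Qed.

Lemma restr_star_nth s i : pw_incomp (unzip1 s) -> i < size s ->
  restr (star s) (nth0 s i).1 = (nth0 s i).2.
Proof. by move=> hpw hi; apply: ptree_ext => x; exact: star_nth_cat. Qed.

Lemma star_above_none r i d : pw_incomp (unzip1 r) -> i < size r ->
  prefix d (nth0 r i).1 -> ~~ prefix (nth0 r i).1 d -> star r d = None.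
Proof.
move=> hpw hi hd hnd; case E: (star r d) => [v|] //.
have [k hk hpk] : exists2 k, k < size r & prefix (nth0 r k).1 d by apply: star_some; rewrite E.
have [/eqP eik|nik] := boolP (i == k); first by subst k; rewrite hpk in hnd.
exfalso; apply: (incomparable_prefix (pw_incomp_nth hpw hi hk nik) (prefix_refl _)).
exact: prefix_trans hpk hd.
Qed.

Lemma star_nonempty s i : pw_incomp (unzip1 s) -> i < size s ->
  nonempty (nth0 s i).2 -> nonempty (star s).
Proof. by move=> hpw hi [x hx]; exists ((nth0 s i).1 ++ x); rewrite star_nth_cat. Qed.

Lemma is_addr_cat a c : is_addr (a ++ c) = is_addr a && is_addr c.
Proof. by rewrite /is_addr all_cat. Qed.

Lemma bp_pempty : blueprint pempty.
Proof. by split => //; exists [::]. Qed.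

Lemma bp_leaf phi : blueprint (leaf phi).
Proof. by split; [exists [:: [::]]; case | case | case]. Qed.

Lemma bp_restr t a : blueprint t -> blueprint (restr t a).
Proof.
case=> [[l hl] ha hat]; split.
- exists [seq drop (size a) d | d <- l] => c hc.
  by apply/mapP; exists (a ++ c); [exact: hl | rewrite drop_size_cat].
- by move=> c /ha; rewrite is_addr_cat => /andP[].
- move=> c phi; rewrite /restr => /hat [[x hx] [y hy]].
  by split; [exists x; move: hx | exists y; move: hy]; rewrite /restr -!catA.
Qed.

Lemma bp_at2 psi g t : blueprint g -> blueprint t -> nonempty g -> nonempty t ->
  blueprint (at2 psi g t).
Proof.
case=> [[lg hlg] hag hatg] [[lt hlt] hat htt] hng hnt; split.
- exists ([::] :: [seq 1 :: d | d <- lg] ++ [seq 2 :: d | d <- lt]) => -[|j c] //=.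
  case: j => [|[|[|j]]] //= hc; rewrite inE mem_cat; apply/orP; right; apply/orP.
    by left; apply/mapP; exists c => //; exact: hlg.
  by right; apply/mapP; exists c => //; exact: hlt.
- move=> [|j c] //=; case: j => [|[|[|j]]] //= hc; rewrite /is_addr /=.
    exact: hag.
  exact: hat.
- move=> [|j c] phi /=; first by case=> _; split.
  case: j => [|[|[|j]]] //= /[dup] h.
    by move/hatg => [[x hx] [y hy]]; split; [exists x | exists y].
  by move/htt => [[x hx] [y hy]]; split; [exists x | exists y].
Qed.

Lemma bp_star_cons c h s : blueprint h -> blueprint (star s) ->
  (forall i, i < size s -> incomparable c (nth0 s i).1) -> is_addr c ->
  blueprint (star ((c, h) :: s)).
Proof.
case=> [[lh hlh] hah hath] [[ls hls] has hats] hinc hc; split.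
- exists ([seq c ++ d | d <- lh] ++ ls) => d; rewrite star_cons mem_cat.
  case: ifP => hcd hd; apply/orP; last by right; exact: hls.
  left; apply/mapP; exists (drop (size c) d); first exact: hlh.
  by case/prefixP: hcd => z ->; rewrite drop_size_cat.
- move=> d; rewrite star_cons; case: ifP => hcd hd; last exact: has.
  case/prefixP: hcd hd => z -> hd; rewrite is_addr_cat hc /=.
  by move: (hah _ hd); rewrite drop_size_cat.
- move=> d phi; rewrite star_cons; case: ifP => hcd.
    case/prefixP: hcd => z ->; rewrite drop_size_cat // => /hath [[x hx] [y hy]].
    split; [exists x; move: hx | exists y; move: hy];
      by rewrite /restr star_cons -!catA prefix_prefix drop_size_cat.
  move=> /hats [[x hx] [y hy]]; split; [exists x | exists y]; rewrite /restr star_cons;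
    case: ifP => // hp.
  + have [i hi hpi] := star_some hx.
    by exfalso; apply: (incomparable_prefix (hinc i hi) hp hpi).
  + have [i hi hpi] := star_some hy.
    by exfalso; apply: (incomparable_prefix (hinc i hi) hp hpi).
Qed.

Lemma bp_star s : pw_incomp (unzip1 s) -> all_bp s -> blueprint (star s).
Proof.
elim: s => [|[c h] s IH] hpw hbp; first exact: bp_pempty.
have [hinc hpw'] := pw_incomp_cons hpw.
apply: bp_star_cons => //; first exact: (hbp 0).
  by apply: IH => // i hi; exact: (hbp i.+1).
by move: hpw; rewrite /pw_incomp /= => /andP[/andP[]].
Qed.

(** * Extraction as pruning *)

Definition prune t a : ptree := fun d => if prefix d a then None else t d.

(* For blueprints [t]: [ext a phi t u <-> extractable t a phi /\ u = prune t a]. *)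
Definition extractable t a phi : Prop :=
  [/\ t a = Some (Form phi),
      forall z, z != [::] -> t (a ++ z) = None
    & forall p, prefix p a -> p != a -> t p <> None ->
        [/\ exists psi, t p = Some (At psi), nth 0 a (size p) = 2
          & forall i c, i != 1 -> i != 2 -> t (p ++ i :: c) = None]].

Lemma prune_sub t x d : prune t x d <> None -> t d <> None.
Proof. by rewrite /prune; case: ifP. Qed.

Lemma bp_prune t a : blueprint t -> blueprint (prune t a).
Proof.
case=> [[l hl] ha hat]; split.
- by exists l => c; rewrite /prune; case: ifP => // _; exact: hl.
- by move=> c; rewrite /prune; case: ifP => // _; exact: ha.
- move=> c phi; rewrite /prune; case: ifP => // hca /hat [[x hx] [y hy]].
  split; [exists x | exists y]; rewrite /restr; case: ifP => // hp;
    by move: hca; rewrite (catl_prefix (catl_prefix hp)).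
Qed.

Lemma prune_leaf psi : prune (leaf psi) [::] = pempty.
Proof. by apply: ptree_ext => -[|x d]. Qed.

Lemma prune_at2 psi g t a : prune (at2 psi g t) (2 :: a) = star0 [:: g; prune t a].
Proof.
apply: ptree_ext => -[|j d] //; rewrite /star0 /prune /= !star_cons /=.
by case: j => [|[|[|j]]] //=; rewrite prefix0s drop0.
Qed.

Lemma unzip1_set_nth s i y : i < size s -> y.1 = (nth0 s i).1 ->
  unzip1 (set_nth ([::], pempty) s i y) = unzip1 s.
Proof.
elim: s i => [|[c h] s IH] [|i] //= hi hy; first by rewrite hy.
by rewrite IH.
Qed.

Lemma star_set_nth_out s i y d : i < size s -> y.1 = (nth0 s i).1 ->
  ~~ prefix y.1 d -> star (set_nth ([::], pempty) s i y) d = star s d.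
Proof.
elim: s i y => [|[c h] s IH] [|i] [c' h'] //= hi hy hd.
  by subst c'; rewrite !star_cons (negbTE hd).
by rewrite !star_cons IH.
Qed.

Lemma prune_star s i a : pw_incomp (unzip1 s) -> i < size s ->
  prune (star s) ((nth0 s i).1 ++ a) =
  star (set_nth ([::], pempty) s i ((nth0 s i).1, prune (nth0 s i).2 a)).
Proof.
move=> hps hi; set s' := set_nth _ s i _.
have hps' : pw_incomp (unzip1 s') by rewrite unzip1_set_nth.
have hpw : pairwise incomparable (unzip1 s) by case/andP: hps.
have hpw' : pairwise incomparable (unzip1 s') by case/andP: hps'.
have hi' : i < size s' by rewrite size_set_nth; apply: leq_trans (leq_maxl _ _).
have hn' : nth0 s' i = ((nth0 s i).1, prune (nth0 s i).2 a) by rewrite nth_set_nth /= eqxx.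
apply: ptree_ext => d; rewrite /prune.
case hpd: (prefix (nth0 s i).1 d).
  rewrite prefix_cat_drop // (star_nth hpw hi hpd).
  by rewrite (star_nth hpw' hi') hn'.
case: ifP => hd; last by rewrite star_set_nth_out //= hpd.
have hd' : prefix d (nth0 s' i).1 by rewrite hn'; exact: (prefix_cat_prefix hd (negbT hpd)).
by rewrite (star_above_none hps' hi' hd') // hn' hpd.
Qed.

Lemma extractable_restr t b a phi : extractable t (b ++ a) phi -> extractable (restr t b) a phi.
Proof.
case=> S1 S2 S3; split => //.
- by move=> z hz; rewrite /restr catA S2.
- move=> p hp hne hn.
  have hp2 : prefix (b ++ p) (b ++ a) by rewrite prefix_catr // eqxx.
  have hne2 : b ++ p != b ++ a by rewrite eqseq_cat // eqxx.
  have [h1 h2 h3] := S3 _ hp2 hne2 hn.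
  split => //; first by move: h2; rewrite nth_cat_size.
  by move=> i c hi1 hi2; rewrite /restr catA h3.
Qed.

Lemma extractable_at2 psi g t a phi :
  extractable t a phi -> extractable (at2 psi g t) (2 :: a) phi.
Proof.
case=> S1 S2 S3; split => // -[|j p] /=.
  by move=> _ _ _; split => [|//|i c /negbTE -> /negbTE ->]; first by exists psi.
move=> /andP[/eqP -> hp] hne hn.
by apply: S3 => //; apply: contraNneq hne => ->.
Qed.

Lemma extractable_star r i a phi : pw_incomp (unzip1 r) -> i < size r ->
  extractable (nth0 r i).2 a phi -> extractable (star r) ((nth0 r i).1 ++ a) phi.
Proof.
move=> hpw hi [S1 S2 S3]; split.
- by rewrite star_nth_cat.
- by move=> z hz; rewrite -catA star_nth_cat // S2.
- move=> p hp hne; case hbp: (prefix (nth0 r i).1 p); last first.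
    by rewrite (star_above_none hpw hi (prefix_cat_prefix hp (negbT hbp)) (negbT hbp)).
  case/prefixP: hbp => p' hpp; subst p; rewrite star_nth_cat // => hn.
  have hp' : prefix p' a by move: hp; rewrite prefix_catr // eqxx.
  have hne' : p' != a by apply: contraNneq hne => ->.
  have [h1 h2 h3] := S3 p' hp' hne' hn.
  split => //; first by rewrite nth_cat_size.
  by move=> j c hj1 hj2; rewrite -catA star_nth_cat // h3.
Qed.

Lemma ext_extractable a phi t u : ext a phi t u -> extractable t a phi /\ u = prune t a.
Proof.
elim => {a phi t u} [phi|a phi psi g t u _ _ _ _ [hS ->]|a phi b t u gs _ hpw _ _ [hS ->]].
- split; last by rewrite prune_leaf.
  by split => //; [case | move=> p; rewrite prefixs0 => /eqP ->; rewrite eqxx].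
- by split; [exact: extractable_at2 | rewrite prune_at2].
- split; first exact: (@extractable_star ((b, t) :: gs) 0).
  by rewrite (@prune_star ((b, t) :: gs) 0).
Qed.

Lemma le_foldr_max (x : nat) (s : seq nat) : x \in s -> x <= foldr maxn 0 s.
Proof.
elim: s => //= y s IH; rewrite inE => /orP[/eqP ->|/IH h]; rewrite leq_max ?leqnn //.
by rewrite h orbT.
Qed.

Lemma blueprint_children_bounded t : blueprint t ->
  exists K, forall k c, t (k :: c) <> None -> 0 < k <= K.
Proof.
case=> [[l hl] haddr _]; exists (foldr maxn 0 [seq head 0 d | d <- l]) => k c hn.
apply/andP; split; first by have := haddr _ hn; rewrite /is_addr /= => /andP[].
by apply: le_foldr_max; apply/mapP; exists (k :: c) => //; exact: hl.
Qed.

(* A rootless blueprint is the juxtaposition of its subtrees at the addresses [(k)];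
   the one at [(j)] is listed first so that it can be replaced by any [X]. *)
Lemma blueprint_star_split t j : blueprint t -> t [::] = None -> 0 < j ->
  exists gs, [/\ pw_incomp ([:: j] :: unzip1 gs), all_bp gs
                & forall X, star (([:: j], X) :: gs) =
                    fun d => if d is k :: c then if k == j then X c else t (k :: c) else None].
Proof.
move=> hbp ht0 hj; have [K hK] := blueprint_children_bounded hbp.
set L := [seq i <- iota 1 K | i != j].
set gs := [seq ([:: i], restr t [:: i]) | i <- L].
have hpw : pw_incomp ([:: j] :: unzip1 gs).
  rewrite /unzip1 -map_comp; apply: (pw_incomp_singles (L := L) hj).
  - by apply/allP => i; rewrite mem_filter mem_iota => /andP[_ /andP[]].
  - by rewrite /= mem_filter eqxx /= filter_uniq // iota_uniq.
have hgs i : i < size gs -> nth0 gs i = ([:: nth 0 L i], restr t [:: nth 0 L i]).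
  by rewrite size_map => hi; rewrite (nth_map 0).
exists gs; split => // [i hi|X]; first by rewrite hgs //; exact: bp_restr.
have [_ /andP[_ hpw']] := pw_incomp_cons hpw.
apply: ptree_ext => -[|k c].
  by rewrite star_cons /=; apply: star_none => i hi; rewrite hgs.
rewrite star_cons /= prefix0s andbT eq_sym drop0; case: ifP => // hkj.
have [kL|kL] := boolP (k \in L).
  have hi : index k L < size gs by rewrite size_map index_mem.
  by rewrite (star_nth hpw' hi) hgs // nth_index //= ?eqxx ?prefix0s // drop0.
rewrite star_none.
  case E: (t (k :: c)) => [v|] //; exfalso; have /hK /andP[h1 h2] : t (k :: c) <> None by rewrite E.
  by move: kL; rewrite mem_filter hkj mem_iota h1 add1n ltnS h2.
move=> i hi; rewrite hgs //= prefix0s andbT; apply: contra kL => /eqP <-.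
by apply: mem_nth; move: hi; rewrite size_map.
Qed.

Lemma extractable_form_root t psi a phi :
  t [::] = Some (Form psi) -> extractable t a phi -> t = leaf phi /\ a = [::].
Proof.
move=> ht0 [S1 S2 S3]; case: a S1 S2 S3 => [|x a'] S1 S2 S3.
  by split=> //; apply: ptree_ext => -[|y d] /=; [rewrite -S1 | rewrite (S2 (y :: d))].
have [[psi' h] _ _] := S3 [::] (prefix0s _) isT (ltac:(by rewrite ht0)).
by rewrite ht0 in h.
Qed.

Lemma extractable_at_root t psi a phi : t [::] = Some (At psi) -> extractable t a phi ->
  exists a', a = 2 :: a' /\ t = at2 psi (restr t [:: 1]) (restr t [:: 2]).
Proof.
move=> ht0 [S1 _ S3]; case: a S1 S3 => [|x a'] S1 S3; first by rewrite ht0 in S1.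
have [_ /= hx hch] := S3 [::] (prefix0s _) isT (ltac:(by rewrite ht0)).
exists a'; split; first by rewrite hx.
by apply: ptree_ext => -[|k c] //=; case: k => [|[|[|k]]] //=; exact: (hch _ c).
Qed.

Lemma extractable_ext t a phi : blueprint t -> extractable t a phi -> ext a phi t (prune t a).
Proof.
elim: {a}(size a) {-2}a (leqnn (size a)) t => [|n IH] a hs t hbp hS.
  case: a hs hS => // _ hS.
  have -> : t = leaf phi.
    by case: hS => S1 S2 _; apply: ptree_ext => -[|x d] //; rewrite (S2 (x :: d)).
  by rewrite prune_leaf; exact: ext_leaf.
have IHr b a' : a = b ++ a' -> size b = 1 -> ext a' phi (restr t b) (prune (restr t b) a').
  move=> ea hb; apply: IH; last by apply: extractable_restr; rewrite -ea.
    by move: hs; rewrite ea size_cat hb.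
  exact: bp_restr.
case ht0: (t [::]) => [[psi|psi]|].
- have [-> ->] := extractable_form_root ht0 hS.
  by rewrite prune_leaf; exact: ext_leaf.
- have [a' [ea et]] := extractable_at_root ht0 hS; subst a.
  have [_ _ hat12] := hbp; have [hne1 _] := hat12 _ _ ht0.
  rewrite {1 2}et prune_at2; apply: ext_at => //; first exact: bp_restr.
    by exists a'; rewrite /restr /=; case: hS => ->.
  exact: IHr [:: 2] _ erefl erefl.
- case: a hs hS IHr => [|j a'] hs hS IHr; first by case: hS; rewrite ht0.
  have hj : 0 < j.
    by case: hbp hS => _ haddr _ [S1 _ _]; have := haddr (j :: a'); rewrite S1 => /(_ ltac:(by [])) /andP[].
  have [gs [hpw hgs et]] := blueprint_star_split hbp ht0 hj.
  have et' : t = star (([:: j], restr t [:: j]) :: gs).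
    by rewrite et; apply: ptree_ext => -[|k c] //; case: eqP => // ->.
  rewrite {1 2}et' (@prune_star (([:: j], restr t [:: j]) :: gs) 0 a' hpw isT) /=.
  by apply: (@ext_star _ a' phi [:: j]) => //; exact: IHr.
Qed.

Section Simulation.
Variable Q : ptree -> ptree -> Prop.
Hypothesis Q_empty : forall t u, Q t u -> t = pempty -> u = pempty.
Hypothesis Q_ext : forall t u a phi t', Q t u -> ext a phi t t' ->
  exists2 u', ext_plus phi u u' & Q t' u'.

Lemma simulation_ext_plus phi t t' : ext_plus phi t t' ->
  forall u, Q t u -> exists2 u', ext_plus phi u u' & Q t' u'.
Proof.
elim => {t t'} [t t' [a ha] u hq|x y z _ IH1 _ IH2 u hq]; first exact: Q_ext hq ha.
have [u1 h1 q1] := IH1 u hq; have [u2 h2 q2] := IH2 u1 q1.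
by exists u2 => //; exact: t_trans h1 h2.
Qed.

Lemma simulation_inF t l : inF t l -> forall u, Q t u -> inF u l.
Proof.
elim => {t l} [u hq|t t' phi l hp _ IH u hq]; first by rewrite (Q_empty hq erefl); exact: inF_nil.
have [u' h1 q1] := simulation_ext_plus hp hq.
exact: inF_rcons h1 (IH _ q1).
Qed.

End Simulation.

(** * Equivalence *)

Lemma equiv_nonempty t u : equiv t u -> (nonempty t <-> nonempty u).
Proof.
elim => {t u} [|//|phi t1 t2 u1 u2 *|s r hsz hps hpr _ _ _ [i [hi [hs hr]]]].
- by [].
- by split => _; exists [::].
- split => _; last exact: (@star_nonempty s i hps hi).
  by apply: (@star_nonempty r i hpr) => //; rewrite -hsz.
Qed.

Lemma equiv_pempty t u : equiv t u -> t = pempty -> u = pempty.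
Proof.
move=> he et; apply: not_nonempty => /(equiv_nonempty he) [d].
by rewrite et.
Qed.

Lemma equiv_bp t u : equiv t u -> blueprint t /\ blueprint u.
Proof.
elim => {t u} [|phi|phi t1 t2 u1 u2 n1 n2 n3 n4 _ [b1 b3] _ [b2 b4]|s r hsz hps hpr _ _ IH _].
- by split; exact: bp_pempty.
- by split; exact: bp_leaf.
- by split; exact: bp_at2.
- split; apply: bp_star => // i hi; first exact: (IH i hi).1.
  by rewrite -hsz in hi; exact: (IH i hi).2.
Qed.

Lemma equiv_star_componentwise s r :
  size s = size r -> pw_incomp (unzip1 s) -> pw_incomp (unzip1 r) ->
  ~ (unzip1 s = [:: [::]] /\ unzip1 r = [:: [::]]) ->
  (forall i, i < size s -> equiv (nth0 s i).2 (nth0 r i).2) ->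
  equiv (star s) (star r).
Proof.
move=> hsz hps hpr hnb hcomp.
case: (classic (exists i, i < size s /\ nonempty (nth0 s i).2 /\ nonempty (nth0 r i).2)).
  exact: equiv_star.
move=> hnex; have hemp k : k < size s -> (nth0 s k).2 = pempty /\ (nth0 r k).2 = pempty.
  move=> hk; have hiff := equiv_nonempty (hcomp k hk).
  have hn : ~ nonempty (nth0 s k).2 by move=> hn; apply: hnex; exists k; rewrite -hiff.
  by split; apply: not_nonempty; rewrite -?hiff.
rewrite !star_empty; first exact: equiv_empty.
- by move=> k; rewrite -hsz => /hemp[].
- by move=> k /hemp[].
Qed.

Lemma equiv_extractable t u : equiv t u -> forall a phi, extractable t a phi ->
  exists a', extractable u a' phi /\ equiv (prune t a) (prune u a').
Proof.
elim => {t u}.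
- by move=> a phi [].
- move=> psi a phi hS; have [hF _ _] := hS.
  case: a hS hF => [|x a] hS // _; exists [::]; split => //.
  by rewrite prune_leaf; exact: equiv_empty.
- move=> psi t1 t2 u1 u2 n1 n2 n3 n4 e1 _ e2 IH2 a phi hS.
  have [a' [ea _]] := extractable_at_root (erefl : at2 psi t1 t2 [::] = _) hS; subst a.
  have [a2 [hS2 he]] := IH2 a' phi (@extractable_restr _ [:: 2] _ _ hS).
  exists (2 :: a2); split; first exact: extractable_at2.
  rewrite !prune_at2; apply: equiv_star => //=; [by case | by case=> [|[|i]] | by exists 0].
- move=> s r hsz hps hpr hnb hcomp IH _ a phi hS; have [hF _ _] := hS.
  have [i hi /prefixP [a1 ea]] : exists2 i, i < size s & prefix (nth0 s i).1 a.
    by apply: star_some; rewrite hF.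
  subst a; have hir : i < size r by rewrite -hsz.
  have hSi : extractable (nth0 s i).2 a1 phi by rewrite -restr_star_nth //; exact: extractable_restr.
  have [a2 [hS2 he]] := IH i hi a1 phi hSi.
  exists ((nth0 r i).1 ++ a2); split; first exact: extractable_star.
  rewrite (prune_star _ hps hi) (prune_star _ hpr hir).
  apply: equiv_star_componentwise; rewrite ?size_set_nth ?hsz ?unzip1_set_nth -?hsz //.
  move=> k; rewrite (maxn_idPr hi) => hk; rewrite !nth_set_nth /=.
  by case: eqP => // _; exact: hcomp.
Qed.

Lemma equiv_inF t u l : equiv t u -> inF t l -> inF u l.
Proof.
move=> he hi; apply: (simulation_inF (Q := equiv) _ _ hi he); first exact: equiv_pempty.
move=> t1 u1 a phi t' h /ext_extractable [hS ->].
have [a' [hS' he']] := equiv_extractable h hS.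
exists (prune u1 a') => //; apply: t_step; exists a'; apply: extractable_ext => //.
exact: (equiv_bp h).2.
Qed.

(** * Grafted copies *)

Definition graft g a : ptree := fun d => if prefix a d then g (drop (size a) d) else None.

Definition overlay t u : ptree := fun d => if t d is Some v then Some v else u d.

Lemma graft_cat g a y : graft g a (a ++ y) = g y.
Proof. by rewrite /graft prefix_prefix drop_size_cat. Qed.

Lemma graft_out g a d : ~~ prefix a d -> graft g a d = None.
Proof. by rewrite /graft => /negbTE ->. Qed.

Lemma graft_some g a d : graft g a d <> None -> exists2 y, d = a ++ y & g y <> None.
Proof.
rewrite /graft; case: ifP => // /prefixP [y ->]; rewrite drop_size_cat // => h.
by exists y.
Qed.

Lemma graft_prune_in g a x d : prefix d (a ++ x) -> graft (prune g x) a d = None.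
Proof.
rewrite /graft /prune; case: ifP => // /prefixP [q ->].
by rewrite drop_size_cat // prefix_catr // eqxx /= => ->.
Qed.

Lemma graft_prune_out g a x d : ~~ prefix d (a ++ x) -> graft (prune g x) a d = graft g a d.
Proof.
rewrite /graft /prune; case: ifP => // /prefixP [q ->].
by rewrite drop_size_cat // prefix_catr // eqxx /= => /negbTE ->.
Qed.

Lemma overlay_l t u d : t d <> None -> overlay t u d = t d.
Proof. by rewrite /overlay; case: (t d). Qed.

Lemma overlay_r t u d : t d = None -> overlay t u d = u d.
Proof. by rewrite /overlay => ->. Qed.

Lemma overlay_swap t g h : (forall d, g d <> None -> h d = None) ->
  overlay (overlay t g) h = overlay (overlay t h) g.
Proof.
move=> H; apply: ptree_ext => d; rewrite /overlay.
case: (t d) => //; case E: (g d) => [v|]; last by case: (h d).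
by rewrite H // E.
Qed.

(* [overlay (overlay T (graft g0 a)) (graft g1 b)] is the context [T] with [g0] at
   [a] and a copy [g1] of it at [b].  The spine condition says that a context node
   above the copy is above [a] as well, on the same side: hence extracting a leaf of
   the context never touches the copy without cutting into [g0] too, and the copy
   stays a copy. *)
Record grafting (T g0 g1 : ptree) (a b : addr) : Prop := {
  grafting_equiv : equiv g0 g1;
  grafting_incomparable : incomparable a b;
  grafting_source_free : forall y z, g0 y <> None -> T (a ++ y ++ z) = None;
  grafting_copy_free : forall y z, g1 y <> None -> T (b ++ y ++ z) = None;
  grafting_spine : forall p y, T p <> None -> g1 y <> None -> prefix p (b ++ y) ->
    [/\ prefix p a, p != a, prefix p b, p != b & nth 0 a (size p) = nth 0 b (size p)] }.

Lemma grafting_sub T g0 g1 a b T' g0' g1' :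
  grafting T g0 g1 a b -> equiv g0' g1' ->
  (forall d, T' d <> None -> T d <> None) ->
  (forall d, g0' d <> None -> g0 d <> None) ->
  (forall d, g1' d <> None -> g1 d <> None) ->
  grafting T' g0' g1' a b.
Proof.
move=> [_ hab h4 h5 h6] he hT h0 h1; split => //.
- move=> y z hy; case E: (T' _) => [v|] //; exfalso; apply: (hT (a ++ y ++ z)).
    by rewrite E.
  exact: h4 (h0 _ hy).
- move=> y z hy; case E: (T' _) => [v|] //; exfalso; apply: (hT (b ++ y ++ z)).
    by rewrite E.
  exact: h5 (h1 _ hy).
- move=> p y hp hy hpy; exact: h6 (hT _ hp) (h1 _ hy) hpy.
Qed.

Section Grafting.
Variables (T g0 g1 : ptree) (a b : addr).
Hypothesis hG : grafting T g0 g1 a b.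

Let t := overlay T (graft g0 a).
Let u := overlay t (graft g1 b).
Let hab := grafting_incomparable hG.

Lemma t_source y : g0 y <> None -> t (a ++ y) = g0 y.
Proof.
move=> hy; rewrite /t overlay_r ?graft_cat //.
by have := grafting_source_free hG [::] hy; rewrite cats0.
Qed.

Lemma t_copy y z : g1 y <> None -> t (b ++ y ++ z) = None.
Proof.
by move=> hy; rewrite /t overlay_r ?(grafting_copy_free hG) // graft_out // incomparable_cat.
Qed.

Lemma u_copy y : g1 y <> None -> u (b ++ y) = g1 y.
Proof. by move=> hy; rewrite /u overlay_r ?graft_cat //; have := @t_copy y [::] hy; rewrite cats0. Qed.

Lemma u_out d : ~~ prefix b d -> u d = t d.
Proof. by move=> h; rewrite /u /overlay graft_out //; case: (t d). Qed.

Lemma t_above_copy d : prefix d b -> t d = T d.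
Proof.
move=> hd; rewrite /t /overlay; case: (T d) => //; apply: graft_out; apply/negP => ha.
exact: (incomparable_prefix hab (prefix_trans ha hd) (prefix_refl b)).
Qed.

Lemma source_nonempty y : g1 y <> None -> exists y0, g0 y0 <> None.
Proof. by move=> hy; apply/(equiv_nonempty (grafting_equiv hG)); exists y. Qed.

Lemma copy_off_spine x phi p i c : extractable t x phi -> prefix p x -> p != x -> t p <> None ->
  i != 1 -> i != 2 -> graft g1 b (p ++ i :: c) = None.
Proof.
move=> [S1 S2 S3] hp hne hn hi1 hi2; case E: (graft g1 b (p ++ i :: c)) => [v|] //.
have [y ey hy] : exists2 y, p ++ i :: c = b ++ y & g1 y <> None by apply: graft_some; rewrite E.
have hpb : prefix p (b ++ y) by rewrite -ey prefix_prefix.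
have [_ _ hch] := S3 p hp hne hn.
case hT: (T p) => [w|]; last first.
  have [q eq _] : exists2 q, p = a ++ q & g0 q <> None.
    by apply: graft_some; move: hn; rewrite /t overlay_r.
  by move: hpb; rewrite eq => /catl_prefix; rewrite (negbTE (incomparable_cat y hab)).
have hTp : T p <> None by rewrite hT.
have [pa pna pb pnb hnth] := grafting_spine hG hTp hy hpb.
have [y0 hy0] := source_nonempty hy.
have [w1 ea] := prefix_nth_cons pa pna.
have [w2 eb] := prefix_nth_cons pb pnb.
have hik : i = nth 0 a (size p).
  move: ey; rewrite {1}eb -catA => /(congr1 (drop (size p))); rewrite !drop_size_cat //.
  by case=> -> _; rewrite hnth.
by have := hch i (w1 ++ y0) hi1 hi2; rewrite hik -cat_cons catA -ea t_source.
Qed.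

Lemma extractable_overlay_copy x phi : extractable t x phi ->
  (forall y, g1 y <> None -> ~~ prefix (b ++ y) x) ->
  (forall y, g1 y <> None -> ~~ prefix x (b ++ y)) -> extractable u x phi.
Proof.
move=> hS h1 h2; have [S1 S2 S3] := hS; split.
- by rewrite /u overlay_l // S1.
- move=> z hz; rewrite /u overlay_r ?S2 //.
  case E: (graft g1 b (x ++ z)) => [v|] //.
  have [y ey hy] : exists2 y, x ++ z = b ++ y & g1 y <> None by apply: graft_some; rewrite E.
  by move: (h2 y hy); rewrite -ey prefix_prefix.
- move=> p hp hne hn; case ht: (t p) => [v|].
    have htn : t p <> None by rewrite ht.
    have [hA hnth hch] := S3 p hp hne htn.
    rewrite /u overlay_l //; split => // i c hi1 hi2.
    by rewrite overlay_r ?hch // (copy_off_spine c hS hp hne htn).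
  have [y ey hy] : exists2 y, p = b ++ y & g1 y <> None.
    by apply: graft_some; move: hn; rewrite /u overlay_r.
  by move: (h1 y hy); rewrite -ey hp.
Qed.

Lemma prune_overlay_copy x : (forall y, g1 y <> None -> ~~ prefix (b ++ y) x) ->
  prune u x = overlay (prune t x) (graft g1 b).
Proof.
move=> h1; apply: ptree_ext => d; rewrite /prune /overlay; case hd: (prefix d x) => //=.
case E: (graft g1 b d) => [v|] //.
have [y ey hy] : exists2 y, d = b ++ y & g1 y <> None by apply: graft_some; rewrite E.
by move: (h1 y hy); rewrite -ey hd.
Qed.

Lemma extractable_context x phi : extractable t x phi -> T x <> None ->
  [/\ extractable u x phi, prune t x = overlay (prune T x) (graft g0 a)
    & prune u x = overlay (prune t x) (graft g1 b)].
Proof.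
move=> hS hT; have [S1 S2 S3] := hS.
have h1 y : g1 y <> None -> ~~ prefix (b ++ y) x.
  move=> hy; apply/negP => /prefixP [z ez]; apply: hT.
  by rewrite ez -catA (grafting_copy_free hG).
have h2 y : g1 y <> None -> ~~ prefix x (b ++ y).
  move=> hy; apply/negP => hxb.
  have [pa pna _ _ _] := grafting_spine hG hT hy hxb.
  have [y0 hy0] := source_nonempty hy.
  have [w ea] := prefix_nth_cons pa pna.
  have := S2 (nth 0 a (size x) :: w ++ y0) isT.
  by rewrite -cat_cons catA -ea t_source.
split; [exact: extractable_overlay_copy | | exact: prune_overlay_copy].
apply: ptree_ext => d; rewrite /prune /overlay; case hd: (prefix d x) => //=.
case E: (graft g0 a d) => [v|] //.
have [y ey hy] : exists2 y, d = a ++ y & g0 y <> None by apply: graft_some; rewrite E.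
case/prefixP: hd => z ez; exfalso; apply: hT.
by rewrite ez ey -catA (grafting_source_free hG).
Qed.

Lemma extractable_source x phi : extractable t x phi -> T x = None ->
  exists2 x', x = a ++ x' & extractable g0 x' phi.
Proof.
move=> [S1 S2 S3] hT.
have [x' ex hx'] : exists2 x', x = a ++ x' & g0 x' <> None.
  by apply: graft_some; move: S1; rewrite /t overlay_r // => ->.
subst x; exists x' => //; split; first by rewrite -t_source.
- move=> z hz; case E: (g0 (x' ++ z)) => [v|] //.
  by move: (S2 z hz); rewrite -catA t_source ?E.
- move=> q hq hne hn.
  have hq' : prefix (a ++ q) (a ++ x') by rewrite prefix_catr // eqxx.
  have hne' : a ++ q != a ++ x' by rewrite eqseq_cat // eqxx.
  have [[psi hpsi] hnth hch] := S3 _ hq' hne' (ltac:(by rewrite t_source)).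
  split; first by exists psi; rewrite -t_source.
    by move: hnth; rewrite nth_cat_size.
  move=> i c hi1 hi2; case E: (g0 (q ++ i :: c)) => [v|] //.
  by move: (hch i c hi1 hi2); rewrite -catA t_source ?E.
Qed.

Lemma extractable_source_overlay_copy x' phi : extractable t (a ++ x') phi ->
  extractable u (a ++ x') phi.
Proof.
have hba : incomparable b a by rewrite incomparableC.
move=> hS; apply: extractable_overlay_copy => // y _; apply/negP => /catl_prefix.
  by apply/negP; exact: incomparable_cat.
by apply/negP; exact: incomparable_cat.
Qed.

Lemma copy_outside_source x' q : prefix (b ++ q) (a ++ x') = false.
Proof.
by apply/negP => /catl_prefix hb; exact: (incomparable_prefix hab (prefix_prefix a x') hb).
Qed.

Lemma prune_source_copy x' q : prune u (a ++ x') (b ++ q) = u (b ++ q).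
Proof. by rewrite /prune copy_outside_source. Qed.

Lemma context_not_in_copy y' q : g1 y' <> None -> T (b ++ q) <> None ->
  ~ prefix (b ++ q) (b ++ y').
Proof.
move=> hy' hq hp; have [_ _ hpb hne _] := grafting_spine hG hq hy' hp.
move: hne; have := size_prefix hpb; rewrite size_cat -{2}(addn0 (size b)) leq_add2l leqn0.
by rewrite size_eq0 => /eqP ->; rewrite cats0 eqxx.
Qed.

Lemma context_above_copy_above_source x' y' d : g1 y' <> None -> prefix d (b ++ y') ->
  T d <> None -> prefix d (a ++ x').
Proof.
move=> hy' hd hTd; have [pa _ _ _ _] := grafting_spine hG hTd hy' hd.
exact: prefix_trans pa (prefix_prefix a x').
Qed.

Lemma extractable_copy x' y' phi : extractable g1 y' phi ->
  extractable (prune u (a ++ x')) (b ++ y') phi.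
Proof.
move=> [G1 G2 G3]; have hy' : g1 y' <> None by rewrite G1.
split.
- by rewrite prune_source_copy u_copy.
- by move=> z hz; rewrite -catA prune_source_copy /u overlay_r ?t_copy // graft_cat G2.
- move=> p hp hne hn.
  case hbp: (prefix b p); last first.
    have hpb := prefix_cat_prefix hp (negbT hbp).
    exfalso; apply: hn; rewrite /prune; case: ifP => // hpx.
    rewrite u_out ?hbp // t_above_copy //; case hTp: (T p) => [w|] //.
    by rewrite (@context_above_copy_above_source x' y') ?hTp in hpx.
  case/prefixP: hbp => q eq; subst p.
  have hq : prefix q y' by move: hp; rewrite prefix_catr // eqxx.
  have hqne : q != y' by apply: contraNneq hne => ->.
  have htq : t (b ++ q) = None.
    rewrite /t /overlay; case hTq: (T (b ++ q)) => [w|].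
      by case: (@context_not_in_copy y' q); rewrite ?hTq.
    by rewrite graft_out // incomparable_cat.
  have hu : prune u (a ++ x') (b ++ q) = g1 q by rewrite prune_source_copy /u overlay_r // graft_cat.
  rewrite hu in hn; have [[psi hpsi] hnth hch] := G3 q hq hqne hn.
  split; first by exists psi; rewrite hu.
    by rewrite nth_cat_size.
  move=> i c hi1 hi2; rewrite -catA prune_source_copy /u overlay_r ?graft_cat ?hch //.
  by apply: t_copy; rewrite hpsi.
Qed.

Lemma prune_source x' : prune t (a ++ x') = overlay (prune T (a ++ x')) (graft (prune g0 x') a).
Proof.
apply: ptree_ext => d; rewrite /prune /overlay; case hd: (prefix d (a ++ x')) => /=.
  by rewrite graft_prune_in.
by rewrite /t /overlay graft_prune_out ?hd.
Qed.

Lemma prune_copy x' y' : g1 y' <> None ->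
  prune (prune u (a ++ x')) (b ++ y') = overlay (prune t (a ++ x')) (graft (prune g1 y') b).
Proof.
move=> hy'; apply: ptree_ext => d; rewrite {1}/prune.
case hd: (prefix d (b ++ y')).
  rewrite /overlay graft_prune_in // /prune; case: ifP => // hdx.
  case hbd: (prefix b d).
    case/prefixP: hbd => q eq; subst d.
    rewrite /t /overlay; case hTq: (T (b ++ q)) => [w|].
      by case: (@context_not_in_copy y' q); rewrite ?hTq.
    by rewrite graft_out // incomparable_cat.
  rewrite t_above_copy ?(prefix_cat_prefix hd) ?hbd //; case hTd: (T d) => [w|] //.
  by rewrite (@context_above_copy_above_source x' y') ?hTd in hdx.
rewrite /prune /overlay; case hdx: (prefix d (a ++ x')) => /=.
  rewrite graft_out //; apply/negP => hbd.
  by have := copy_outside_source x' [::]; rewrite cats0 (prefix_trans hbd hdx).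
by rewrite /u /overlay graft_prune_out ?hd.
Qed.

End Grafting.

Definition copy_grafted t u : Prop := exists T g0 g1 a b,
  [/\ grafting T g0 g1 a b, t = overlay T (graft g0 a) & u = overlay t (graft g1 b)].

Lemma copy_grafted_pempty t u : copy_grafted t u -> t = pempty -> u = pempty.
Proof.
move=> [T [g0 [g1 [a [b [hG et eu]]]]]] ht; subst u; apply: ptree_ext => d.
rewrite overlay_r ?ht //; case E: (graft g1 b d) => [v|] //; exfalso.
have [y _ hy] : exists2 y, d = b ++ y & g1 y <> None by apply: graft_some; rewrite E.
have [y0 hy0] := source_nonempty hG hy.
by have := t_source hG hy0; rewrite -et ht => /esym.
Qed.

Lemma copy_grafted_ext t u x phi t' : copy_grafted t u -> blueprint u -> ext x phi t t' ->
  exists2 u', ext_plus phi u u' & copy_grafted t' u' /\ blueprint u'.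
Proof.
move=> [T [g0 [g1 [a [b [hG et eu]]]]]] hbu /ext_extractable [hS ->]; subst u t.
case hT: (T x) => [v|].
- have [hSu e1 e2] := extractable_context hG hS (ltac:(by rewrite hT)).
  exists (prune (overlay (overlay T (graft g0 a)) (graft g1 b)) x).
    by apply: t_step; exists x; exact: extractable_ext.
  split; last exact: bp_prune.
  exists (prune T x), g0, g1, a, b; split => //.
  by apply: (grafting_sub hG (grafting_equiv hG) (@prune_sub T x)).
- have [x' ex hSg0] := extractable_source hG hS hT; subst x.
  have [y' [hSg1 heq]] := equiv_extractable (grafting_equiv hG) hSg0.
  have hy' : g1 y' <> None by case: hSg1 => ->.
  exists (prune (prune (overlay (overlay T (graft g0 a)) (graft g1 b)) (a ++ x')) (b ++ y')).
    apply: t_trans; apply: t_step.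
      by exists (a ++ x'); apply: extractable_ext => //; exact: extractable_source_overlay_copy.
    by exists (b ++ y'); apply: extractable_ext; [exact: bp_prune | exact: extractable_copy].
  split; last by do 2 apply: bp_prune.
  exists (prune T (a ++ x')), (prune g0 x'), (prune g1 y'), a, b.
  split; [|exact: prune_source|exact: prune_copy].
  exact: (grafting_sub hG heq (@prune_sub _ _) (@prune_sub _ _) (@prune_sub _ _)).
Qed.

Lemma copy_grafted_inF t u l : copy_grafted t u -> blueprint u -> inF t l -> inF u l.
Proof.
move=> hq hbu hi.
apply: (simulation_inF (Q := fun t u => copy_grafted t u /\ blueprint u) _ _ hi) => //.
  by move=> ? ? [h _]; exact: copy_grafted_pempty.
by move=> ? ? ? ? ? [h hb] hx; exact: copy_grafted_ext hx.
Qed.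

Lemma grafting_cons k T' T g0 g1 a b : grafting T g0 g1 a b ->
  (forall c, T' (k :: c) = T c) -> grafting T' g0 g1 (k :: a) (k :: b).
Proof.
move=> [he hab h4 h5 h6] hT; split => //=.
- by rewrite /incomparable /= eqxx.
- by move=> y z hy; rewrite hT h4.
- by move=> y z hy; rewrite hT h5.
- move=> [|j p] y hp hy hpy; first by split; rewrite ?prefix0s.
  move: hpy hp; rewrite /= => /andP[/eqP -> hpy]; rewrite hT => hp.
  have [pa pna pb pnb hnth] := h6 _ _ hp hy hpy.
  by split; rewrite /= ?eqseq_cons ?eqxx.
Qed.

Lemma at2_overlay_graftl phi T g0 a g :
  at2 phi (overlay T (graft g0 a)) g = overlay (at2 phi T g) (graft g0 (1 :: a)).
Proof.
apply: ptree_ext => -[|k c] //; case: k => [|[|[|k]]] //=; rewrite /overlay /graft //=.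
by case: (g c).
Qed.

Lemma at2_overlay_graftr phi T g0 a g :
  at2 phi g (overlay T (graft g0 a)) = overlay (at2 phi g T) (graft g0 (2 :: a)).
Proof.
apply: ptree_ext => -[|k c] //; case: k => [|[|[|k]]] //=; rewrite /overlay /graft //=.
by case: (g c).
Qed.

Lemma copy_grafted_atl phi g t u :
  copy_grafted t u -> copy_grafted (at2 phi t g) (at2 phi u g).
Proof.
move=> [T [g0 [g1 [a [b [hG -> ->]]]]]].
exists (at2 phi T g), g0, g1, (1 :: a), (1 :: b).
by rewrite !at2_overlay_graftl; split => //; exact: (grafting_cons hG).
Qed.

Lemma copy_grafted_atr phi g t u :
  copy_grafted t u -> copy_grafted (at2 phi g t) (at2 phi g u).
Proof.
move=> [T [g0 [g1 [a [b [hG -> ->]]]]]].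
exists (at2 phi g T), g0, g1, (2 :: a), (2 :: b).
by rewrite !at2_overlay_graftr; split => //; exact: (grafting_cons hG).
Qed.

Lemma star_rcons s c g : all (incomparable^~ c) (unzip1 s) ->
  star (rcons s (c, g)) = overlay (star s) (graft g c).
Proof.
move=> H; apply: ptree_ext => d; elim: s H => [|[c0 h] s IH] /= H.
  by rewrite star_cons /overlay /graft /=; case: ifP.
case/andP: H => h0 H; rewrite !star_cons; case: ifP => hc0; last first.
  by rewrite IH // /overlay star_cons hc0.
rewrite /overlay star_cons hc0 graft_out; first by case: (h _).
by apply/negP => hc; exact: (incomparable_prefix h0 hc0 hc).
Qed.

Lemma star_support_incomparable s c e z : all (incomparable^~ c) (unzip1 s) ->
  star s e <> None -> ~~ prefix c (e ++ z).
Proof.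
move=> H /star_some [k hk hpk]; apply/negP => hc.
have hx : (nth0 s k).1 \in unzip1 s by rewrite -(nth_map _ [::]) // mem_nth // size_map.
exact: (incomparable_prefix (allP H _ hx) (prefix_catl _ hpk) hc).
Qed.

Lemma copy_grafted_star s r c g :
  all (incomparable^~ c) (unzip1 s) -> all (incomparable^~ c) (unzip1 r) ->
  copy_grafted (star s) (star r) -> copy_grafted (star (rcons s (c, g))) (star (rcons r (c, g))).
Proof.
move=> hs hr [T [g0 [g1 [a [b [[he hab h4 h5 h6] et eu]]]]]].
have ns y : g0 y <> None -> star s (a ++ y) <> None.
  by rewrite et /overlay graft_cat; case: (T _).
have nr y : g1 y <> None -> star r (b ++ y) <> None.
  by rewrite eu /overlay graft_cat; case: (star s _).
have off_c (h : ptree) e : (forall y, h y <> None -> star r (e ++ y) <> None) \/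
    (forall y, h y <> None -> star s (e ++ y) <> None) ->
    forall d, graft h e d <> None -> graft g c d = None.
  move=> hn d /graft_some [y -> hy]; apply: graft_out; rewrite -[e ++ y]cats0.
  by case: hn => /(_ y hy); [apply: star_support_incomparable hr | apply: star_support_incomparable hs].
exists (overlay T (graft g c)), g0, g1, a, b.
rewrite (star_rcons _ hs) (star_rcons _ hr) et eu et; split.
- split => //.
  + move=> y z hy; rewrite /overlay h4 // graft_out //.
    by rewrite catA; apply: star_support_incomparable hs (ns y hy).
  + move=> y z hy; rewrite /overlay h5 // graft_out //.
    by rewrite catA; apply: star_support_incomparable hr (nr y hy).
  + move=> p y hp hy hpy; case hT: (T p) => [w|].
      by apply: h6 hy hpy; rewrite hT.
    exfalso; move: hp; rewrite /overlay hT => /graft_some [q eq _]; subst p.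
    have := star_support_incomparable [::] hr (nr y hy); rewrite cats0.
    by rewrite (prefix_trans (prefix_prefix c q) hpy).
- by rewrite overlay_swap //; apply: off_c; right.
- rewrite (overlay_swap _ (off_c _ _ _)); last by left.
  by rewrite (overlay_swap _ (off_c _ _ _)) //; right.
Qed.

Lemma arr1_copy_grafted t u : arr 1 t u -> copy_grafted t u /\ blueprint u.
Proof.
elim => {t u}.
- move=> [|a [|? ?]] b [|g0 [|g1 [|? ?]]] //= _ _ hpw hcomp _.
  have he : equiv g0 g1 := hcomp 0 isT.
  have hab : incomparable a b by move: hpw; rewrite /pw_incomp /= => /andP[_ /andP[/andP[]]].
  split; last first.
    by apply: bp_star => // -[|[|i]] //= _; [exact: (equiv_bp he).1 | exact: (equiv_bp he).2].
  exists pempty, g0, g1, a, b; split; first by split.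
  + by apply: ptree_ext => d; rewrite star_cons /overlay /graft; case: ifP.
  + apply: ptree_ext => d; rewrite /overlay !star_cons /graft.
    case ha: (prefix a d); case hb: (prefix b d) => //=; try by case: (g0 _).
    by case: (incomparable_prefix hab ha hb).
- move=> phi t u g _ [hq hbu] _ hnu hbg hng.
  by split; [exact: copy_grafted_atl | exact: bp_at2].
- move=> phi t u g _ [hq hbu] _ hnu hbg hng.
  by split; [exact: copy_grafted_atr | exact: bp_at2].
- move=> s r c g _ hpr _ hbr hpsc hprc _ [hq hbu] hbg _.
  have hs : all (incomparable^~ c) (unzip1 s).
    by move: hpsc; rewrite /pw_incomp pairwise_rcons => /andP[_ /andP[]].
  have hr : all (incomparable^~ c) (unzip1 r).
    by move: hprc; rewrite /pw_incomp pairwise_rcons => /andP[_ /andP[]].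
  split; first exact: copy_grafted_star.
  apply: bp_star; first by rewrite /unzip1 map_rcons.
  move=> i; rewrite size_rcons ltnS leq_eqVlt nth_rcons => /orP[/eqP ->|hi].
    by rewrite ltnn eqxx.
  by rewrite hi; exact: hbr.
Qed.

Lemma sqsub1_inF t u : sqsub 1 t u -> forall l, inF t l -> inF u l.
Proof.
elim => {t u} [t u [he|ha] l hi| //| x y z _ IH1 _ IH2 l hi]; last exact/IH2/IH1.
  exact: equiv_inF he hi.
by have [hq hbu] := arr1_copy_grafted ha; exact: copy_grafted_inF hq hbu hi.
Qed.

End Blueprints.

Theorem lemma4p11 (F : Type) (alpha beta : ptree F) :
  blueprint alpha -> blueprint beta ->
  sqsub 1 alpha beta ->
  forall l : seq F, inF alpha l -> inF beta l.
Proof. by move=> _ _; exact: sqsub1_inF. Qed.
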